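(* Let $\beta_1,\dots,\beta_d$ be fixed positive reals and let $c>0$ satisfy $c\le\sum_{i=1}^d\beta_i$. Over positive reals $\alpha_1,\dots,\alpha_d$ with $\sum_{i=1}^d\alpha_i=c$, the minimum of $$f(\alpha_1,\dots,\alpha_d)=\sum_{i=1}^d\frac{\beta_i}{\alpha_i}+\sum_{i=1}^d\ln\alpha_i$$ is achieved at $\alpha_i^*=\frac{\sqrt{1-4\lambda^*\beta_i}-1}{-2\lambda^*}$, where $\lambda^*\le0$ is the unique solution of $\sum_{i=1}^d\frac{2\beta_i}{1+\sqrt{1-4\lambda^*\beta_i}}=c$. *)

From mathcomp Require Import all_boot all_order all_algebra.
From mathcomp Require Import all_classical all_reals all_analysis.
Set Implicit Arguments. Unset Strict Implicit. Unset Printing Implicit Defensive.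
Import Order.TTheory GRing.Theory Num.Theory.
Local Open Scope ring_scope.

Definition fobj (R : realType) (d : nat) (beta alpha : 'I_d -> R) : R :=
  \sum_(i < d) beta i / alpha i + \sum_(i < d) ln (alpha i).

Definition feasible (R : realType) (d : nat) (c : R) (alpha : 'I_d -> R) : Prop :=
  (forall i, 0 < alpha i) /\ \sum_(i < d) alpha i = c.

Definition lam_eq (R : realType) (d : nat) (beta : 'I_d -> R) (c lam : R) : Prop :=
  \sum_(i < d) (2 * beta i) / (1 + Num.sqrt (1 - 4 * lam * beta i)) = c.

(* alpha^*_i = (sqrt(1 - 4 lam beta_i) - 1)/(-2 lam); for lam = 0 the formula is
   0/0 and we use its (continuous) limit value beta_i. *)
Definition alpha_star (R : realType) (d : nat) (beta : 'I_d -> R) (lam : R)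
  (i : 'I_d) : R :=
  if lam == 0 then beta i
  else (Num.sqrt (1 - 4 * lam * beta i) - 1) / (- 2 * lam).

From mathcomp Require Import all_boot all_order all_algebra.
From mathcomp Require Import all_classical all_reals all_analysis.
From mathcomp Require Import ring lra.
Import Order.TTheory GRing.Theory Num.Theory.
Import numFieldNormedType.Exports.
Local Open Scope ring_scope.

(* For [l <= 0] the one-variable Lagrangian [a |-> b / a + ln a - l * a] attains its
   minimum on [(0, +oo)] at the positive root [a0 = 2 b / (1 + sqrt (1 - 4 l b))] of
   [a - l a^2 = b], which is the paper's [alpha^*_i] with the square root
   rationalised: [ln a0 - ln a <= a0 / a - 1], and the remaining terms add up to
   [- l (a0 - a)^2 / a >= 0].  As [f alpha] is the sum of these Lagrangians plus
   [l * sum_i alpha_i], every [l <= 0] whose roots sum to [c] makes [alpha^*] a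
   minimiser of [f] on the feasible set.  The sum of the roots is continuous and
   strictly increasing in [l <= 0], equals [sum_i beta_i >= c] at [l = 0] and is
   at most [c] far enough to the left, so exactly one such [l] exists. *)

Section CriticalPoint.
Context {R : realType}.
Implicit Types b l a : R.

Definition critical_point b l : R := 2 * b / (1 + Num.sqrt (1 - 4 * l * b)).

Lemma critical_point_denom_gt0 b l : 0 < 1 + Num.sqrt (1 - 4 * l * b).
Proof. by rewrite ltr_wpDr ?sqrtr_ge0. Qed.

Lemma critical_point_gt0 b l : 0 < b -> 0 < critical_point b l.
Proof. by move=> b_gt0; rewrite divr_gt0 ?mulr_gt0 ?critical_point_denom_gt0. Qed.

Lemma critical_point0 b : critical_point b 0 = b.
Proof. by rewrite /critical_point mulr0 mul0r subr0 sqrtr1; field. Qed.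

Lemma critical_point_root b l : 0 <= 1 - 4 * l * b ->
  critical_point b l - l * critical_point b l ^+ 2 = b.
Proof.
move=> disc_ge0; rewrite /critical_point.
have := critical_point_denom_gt0 b l; have := sqr_sqrtr disc_ge0.
set r := Num.sqrt _ => r2 /lt0r_neq0 r1_neq0.
transitivity (b - b * (r ^+ 2 - (1 - 4 * l * b)) / (1 + r) ^+ 2); first by field.
by rewrite r2 subrr mulr0 mul0r subr0.
Qed.

Lemma alpha_starE d (beta : 'I_d -> R) l i : 0 <= 1 - 4 * l * beta i ->
  alpha_star beta l i = critical_point (beta i) l.
Proof.
move=> disc_ge0; rewrite /alpha_star; have [->|l_neq0] := eqVneq l 0.
  by rewrite critical_point0.
rewrite /critical_point.
have := critical_point_denom_gt0 (beta i) l; have := sqr_sqrtr disc_ge0.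
set r := Num.sqrt _ => r2 /lt0r_neq0 r1_neq0.
apply/eqP; rewrite eqr_div ?mulf_neq0 ?oppr_eq0 ?pnatr_eq0 //; apply/eqP.
by transitivity (r ^+ 2 - 1); [ring | rewrite r2; ring].
Qed.

Lemma critical_point_lt b l1 l2 : 0 < b -> l1 < l2 -> 0 <= 1 - 4 * l2 * b ->
  critical_point b l1 < critical_point b l2.
Proof.
move=> b_gt0 l12 disc_ge0.
have l12b : 4 * l1 * b < 4 * l2 * b by rewrite ltr_pM2r // ltr_pM2l.
have sqrt_lt : Num.sqrt (1 - 4 * l2 * b) < Num.sqrt (1 - 4 * l1 * b).
  by rewrite ltr_sqrt ?ltrB2l //; lra.
rewrite ltr_pM2l ?mulr_gt0 // ltf_pV2 ?posrE ?critical_point_denom_gt0 //.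
by rewrite ltrD2l.
Qed.

Lemma critical_point_le_inv b (B u : R) : 0 <= b -> b <= B -> 0 < u ->
  critical_point b (- (B * u ^+ 2)) <= u^-1.
Proof.
move=> b_ge0 bB u_gt0; rewrite /critical_point.
set s := Num.sqrt _.
have bu_le_s : 2 * b * u <= s.
  have bu_ge0 : 0 <= 2 * b * u by nra.
  have bbu : b * (b * u ^+ 2) <= B * (b * u ^+ 2).
    by apply: ler_wpM2r => //; rewrite mulr_ge0 ?sqr_ge0.
  by rewrite -(ger0_norm bu_ge0) -sqrtr_sqr ler_sqrt; nra.
rewrite ler_pdivrMr ?critical_point_denom_gt0 // -[2 * b](mulfK (lt0r_neq0 u_gt0)).
rewrite mulrC ler_pM2l ?invr_gt0 //; lra.
Qed.

Lemma continuous_critical_point b : continuous (critical_point b).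
Proof.
rewrite /critical_point => l.
have cst k : {for l, continuous (fun=> k : R)} by exact: cst_continuous.
have id_cont : {for l, continuous (@id R)} by [].
have radicand : {for l, continuous (fun x : R => 1 - 4 * x * b)}.
  apply: continuousD (cst 1) (continuousN _).
  exact: continuousM (continuousM (cst 4) id_cont) (cst b).
have denom : {for l, continuous (fun x : R => 1 + Num.sqrt (1 - 4 * x * b))}.
  exact: continuousD (cst 1) (continuous_comp radicand (@sqrt_continuous R _)).
apply: continuousM (cst _) (continuousV _ denom).
exact: lt0r_neq0 (critical_point_denom_gt0 b l).
Qed.

Definition lagrangian b l a : R := b / a + ln a - l * a.

Lemma lagrangian_min b l a0 a : l <= 0 -> 0 < a0 -> 0 < a ->
  a0 - l * a0 ^+ 2 = b -> lagrangian b l a0 <= lagrangian b l a.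
Proof.
move=> l_le0 a0_gt0 a_gt0 b_root; rewrite /lagrangian.
have ln_le : ln a0 - ln a <= a0 / a - 1.
  rewrite -ln_div ?posrE // -[X in ln X](subrK 1) addrC le_ln1Dx //.
  by rewrite ltrBrDl subrr divr_gt0.
have rest : b / a - b / a0 - (a0 / a - 1) - l * a + l * a0 = - l * (a0 - a) ^+ 2 / a.
  by rewrite -b_root; field; rewrite !gt_eqF.
have : 0 <= - l * (a0 - a) ^+ 2 / a.
  by rewrite divr_ge0 ?(ltW a_gt0) // mulr_ge0 ?sqr_ge0 ?oppr_ge0.
lra.
Qed.

Section Multiplier.
Context {d : nat} {beta : 'I_d -> R}.
Hypothesis beta_gt0 : forall i, 0 < beta i.

Definition multiplier_sum (l : R) : R := \sum_(i < d) critical_point (beta i) l.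

Lemma continuous_multiplier_sum : continuous multiplier_sum.
Proof.
apply: continuous_big => [|i _]; first exact: add_continuous.
exact: continuous_critical_point.
Qed.

Lemma multiplier_sum0 : multiplier_sum 0 = \sum_(i < d) beta i.
Proof. by apply: eq_bigr => i _; rewrite critical_point0. Qed.

Lemma discriminant_ge0 l i : l <= 0 -> 0 <= 1 - 4 * l * beta i.
Proof. by move=> l_le0; have := beta_gt0 i; nra. Qed.

Lemma multiplier_sum_lt l1 l2 : (0 < d)%N -> l1 < l2 -> l2 <= 0 ->
  multiplier_sum l1 < multiplier_sum l2.
Proof.
move=> d_gt0 l12 l2_le0; apply: ltr_sum => [|i _].
  by rewrite has_predT /index_enum -enumT size_enum_ord.
by rewrite critical_point_lt ?discriminant_ge0.
Qed.

Lemma multiplier_sum_inj l1 l2 : (0 < d)%N -> l1 <= 0 -> l2 <= 0 ->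
  multiplier_sum l1 = multiplier_sum l2 -> l1 = l2.
Proof.
move=> d_gt0 l1_le0 l2_le0 eq12.
case: (ltgtP l1 l2) => // [lt12 | lt21].
  by have := multiplier_sum_lt _ _ d_gt0 lt12 l2_le0; rewrite eq12 ltxx.
by have := multiplier_sum_lt _ _ d_gt0 lt21 l1_le0; rewrite eq12 ltxx.
Qed.

Lemma exists_multiplier_sum_le (c : R) : (0 < d)%N -> 0 < c ->
  exists2 l, l <= 0 & multiplier_sum l <= c.
Proof.
move=> d_gt0 c_gt0; set u := d%:R / c; have u_gt0 : 0 < u by rewrite divr_gt0 ?ltr0n.
have B_ge0 : 0 <= \sum_(i < d) beta i by rewrite sumr_ge0 // => i _; rewrite ltW.
(* At [l = - (sum_i beta_i) u^2] every root is at most [1 / u = c / d]. *)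
exists (- ((\sum_(i < d) beta i) * u ^+ 2)); first by rewrite oppr_le0 mulr_ge0 ?sqr_ge0.
have sum_const : \sum_(i < d) u^-1 = c.
  by rewrite sumr_const card_ord /u; field; rewrite gt_eqF // pnatr_eq0 -lt0n.
rewrite -[leRHS]sum_const; apply: ler_sum => i _.
rewrite critical_point_le_inv ?(ltW (beta_gt0 i)) //.
by rewrite (bigD1 i) //= lerDl sumr_ge0 // => j _; rewrite ltW.
Qed.

Lemma exists_multiplier (c : R) : (0 < d)%N -> 0 < c -> c <= \sum_(i < d) beta i ->
  exists2 l, l <= 0 & multiplier_sum l = c.
Proof.
move=> d_gt0 c_gt0 c_le; have [l0 l0_le0 l0_le] := exists_multiplier_sum_le c d_gt0 c_gt0.
have := IVT l0_le0 (continuous_subspaceT continuous_multiplier_sum) (v := c).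
rewrite ge_min le_max multiplier_sum0 l0_le c_le orbT => /(_ isT).
by case=> l; rewrite in_itv /= => /andP[_ l_le0] ml; exists l.
Qed.

Lemma alpha_star_critical l i : l <= 0 -> alpha_star beta l i = critical_point (beta i) l.
Proof. by move=> l_le0; rewrite alpha_starE ?discriminant_ge0. Qed.

Lemma alpha_star_feasible l (c : R) : l <= 0 -> multiplier_sum l = c ->
  feasible c (alpha_star beta l).
Proof.
move=> l_le0 <-; split=> [i|]; first by rewrite alpha_star_critical ?critical_point_gt0.
by apply: eq_bigr => i _; rewrite alpha_star_critical.
Qed.

Lemma fobj_lagrangian l (alpha : 'I_d -> R) :
  fobj beta alpha = \sum_(i < d) lagrangian (beta i) l (alpha i) + l * \sum_(i < d) alpha i.
Proof. by rewrite /fobj /lagrangian !big_split /= sumrN mulr_sumr subrK. Qed.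

Lemma alpha_star_min l (c : R) (alpha : 'I_d -> R) : l <= 0 -> multiplier_sum l = c ->
  feasible c alpha -> fobj beta (alpha_star beta l) <= fobj beta alpha.
Proof.
move=> l_le0 ml [alpha_gt0 alpha_sum].
have [astar_gt0 astar_sum] := alpha_star_feasible _ _ l_le0 ml.
rewrite !(fobj_lagrangian l) astar_sum alpha_sum lerD2r.
apply: ler_sum => i _; apply: lagrangian_min => //.
by rewrite alpha_star_critical // critical_point_root ?discriminant_ge0.
Qed.

End Multiplier.

End CriticalPoint.

Theorem lemma11 (R : realType) (d : nat) (beta : 'I_d -> R) (c : R)
  (hbeta : forall i, 0 < beta i) (hc : 0 < c)
  (hcle : c <= \sum_(i < d) beta i) :
  (exists! lam : R, lam <= 0 /\ lam_eq beta c lam) /\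
  (forall lam : R, lam <= 0 -> lam_eq beta c lam ->
     feasible c (alpha_star beta lam) /\
     (forall alpha : 'I_d -> R, feasible c alpha ->
        fobj beta (alpha_star beta lam) <= fobj beta alpha)).
Proof.
have d_gt0 : (0 < d)%N by move: hcle; case: d beta {hbeta} => // beta; rewrite big_ord0; lra.
split.
  have [lam lam_le0 lam_root] := exists_multiplier hbeta c d_gt0 hc hcle.
  exists lam; split=> // l [l_le0 l_root].
  by apply: (multiplier_sum_inj hbeta) => //; rewrite lam_root.
move=> lam lam_le0 lam_root; split; first exact: (alpha_star_feasible hbeta).
by move=> alpha; apply: (alpha_star_min hbeta).
Qed.
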